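(* For every positive integer $\nu$ there exists a sequence $v_0,v_1,\dots,v_{\nu^2}$ of length $\nu^2+1$ taking values in a set of $\nu$ symbols and having the isolated equality property: for all distinct indices $i,j$ with $v_i=v_j$, we have $v_{i+1}\ne v_{j+1}$ whenever both are defined, and $v_{i-1}\neq v_{j-1}$ whenever both are defined. *)

From mathcomp Require Import all_boot.
Set Implicit Arguments. Unset Strict Implicit. Unset Printing Implicit Defensive.

(* A sequence v_0, ..., v_N is represented by v : nat -> T, only indices
   0..N being relevant. *)
Definition isolated_equality (T : Type) (N : nat) (v : nat -> T) : Prop :=
  forall i j, i <= N -> j <= N -> i <> j -> v i = v j ->
    (i < N -> j < N -> v i.+1 <> v j.+1) /\
    (0 < i -> 0 < j -> v i.-1 <> v j.-1).

From mathcomp Require Import all_boot.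
From mathcomp Require Import zify.

(* A sequence has the isolated equality property as soon as its consecutive
   pairs (v_i, v_{i+1}) are pairwise distinct, i.e. as soon as it is a walk
   using no edge twice in the complete digraph with loops on the nu symbols.
   That graph has nu^2 edges and is balanced, so it has an Eulerian circuit,
   of length nu^2 + 1.  We build one by induction: a circuit on {0, ..., k}
   ending at 0 is extended by 0, k+1, k+1, 1, k+1, 2, ..., k, k+1, 0, which
   traverses exactly the edges touching the new vertex k+1. *)

Definition walk_edges {T : Type} (s : seq T) : seq (T * T) := zip s (behead s).

Lemma walk_edges_cons2 (T : Type) (x y : T) (s : seq T) :
  walk_edges [:: x, y & s] = (x, y) :: walk_edges (y :: s).
Proof. by []. Qed.

Section WalkEdges.

Variable T : eqType.
Implicit Types (x : T) (s t : seq T).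

Lemma size_walk_edges s : size (walk_edges s) = (size s).-1.
Proof. by rewrite size_zip size_behead; case: s => //= x s; apply/minn_idPr. Qed.

Lemma nth_walk_edges x0 s i : i < (size s).-1 ->
  nth (x0, x0) (walk_edges s) i = (nth x0 s i, nth x0 s i.+1).
Proof. by rewrite nth_zip_cond -/(walk_edges s) size_walk_edges nth_behead => ->. Qed.

Lemma walk_edges_cat x s t :
  walk_edges (x :: s ++ t) = walk_edges (x :: s) ++ walk_edges (last x s :: t).
Proof. by elim: s x => [|y s IH] x //=; rewrite -IH. Qed.

Lemma mem_walk_edges s p : p \in walk_edges s -> (p.1 \in s) && (p.2 \in s).
Proof.
elim: s => [|x [|y s] IH] //; rewrite walk_edges_cons2 in_cons.
case/predU1P=> [-> | /IH/andP[in1 in2]]; first by rewrite /= !inE !eqxx /= orbT.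
by rewrite !inE in in1 in2 *; rewrite in1 in2 !orbT.
Qed.

Lemma walk_edges_map (U : eqType) (f : U -> T) (s : seq U) :
  walk_edges (map f s) = [seq (f p.1, f p.2) | p <- walk_edges s].
Proof.
elim: s => [|x [|y s] IH] //.
by rewrite 2!map_cons 2!walk_edges_cons2 map_cons -IH.
Qed.

Lemma isolated_equality_uniq_walk_edges x0 s :
  uniq (walk_edges s) -> isolated_equality (size s).-1 (nth x0 s).
Proof.
set N := (size s).-1 => uniq_edges.
have edge_inj i j : i < N -> j < N ->
    nth x0 s i = nth x0 s j -> nth x0 s i.+1 = nth x0 s j.+1 -> i = j.
  move=> ltiN ltjN eq_i eq_i1; apply/eqP.
  rewrite -(nth_uniq (x0, x0) _ _ uniq_edges) ?size_walk_edges //.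
  by rewrite !nth_walk_edges // eq_i eq_i1.
move=> i j leiN lejN neq_ij eq_ij; split=> [ltiN ltjN eq_i1 | lt0i lt0j eq_i1].
  exact/neq_ij/edge_inj.
have eq_pred : i.-1 = j.-1 by apply: edge_inj; rewrite ?prednK //; lia.
by apply: neq_ij; lia.
Qed.

End WalkEdges.

Definition star_walk (c : nat) (r : seq nat) : seq nat :=
  c :: flatten [seq [:: j; c] | j <- r].

Lemma star_walk_cons c j r : star_walk c (j :: r) = [:: c, j & star_walk c r].
Proof. by []. Qed.

Lemma last_star_walk x c r : last x (star_walk c r) = c.
Proof. by elim: r. Qed.

Lemma mem_star_walk c r x : (x \in star_walk c r) = (x == c) || (x \in r).
Proof.
elim: r => [|j r IH]; first by rewrite in_cons in_nil.
by rewrite star_walk_cons 2!in_cons IH in_cons; case: (x == c).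
Qed.

Lemma size_star_walk c r : size (star_walk c r) = (size r).*2.+1.
Proof. by elim: r => //= j r [->]. Qed.

Lemma mem_star_walk_edges c r p :
  p \in walk_edges (star_walk c r) =
  ((p.1 == c) && (p.2 \in r)) || ((p.2 == c) && (p.1 \in r)).
Proof.
case: p => a b /=; elim: r => [|j r IH]; first by rewrite !in_nil !andbF.
rewrite star_walk_cons 2!walk_edges_cons2 !in_cons IH !xpair_eqE.
by case: (a == c) (b == c) (a == j) (b == j) (a \in r) (b \in r) => [] [] [] [] [] [].
Qed.

Lemma uniq_star_walk_edges c r : uniq r -> c \notin r -> uniq (walk_edges (star_walk c r)).
Proof.
elim: r => [|j r IH] //; rewrite cons_uniq inE negb_or => /andP[jNr uniq_r] /andP[cNj cNr].
rewrite star_walk_cons 2!walk_edges_cons2 !cons_uniq in_cons negb_or.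
rewrite !mem_star_walk_edges IH // xpair_eqE (negbTE cNj) (negbTE jNr) (negbTE cNr).
by rewrite !andbF.
Qed.

Definition euler_block (k : nat) : seq nat :=
  k.+1 :: rcons (star_walk k.+1 (iota 1 k)) 0.

Lemma walk_edges_euler_block k :
  walk_edges (0 :: euler_block k) =
  [:: (0, k.+1), (k.+1, k.+1) & rcons (walk_edges (star_walk k.+1 (iota 1 k))) (k.+1, 0)].
Proof.
by rewrite walk_edges_cons2 -cats1 walk_edges_cat last_star_walk cats1.
Qed.

Lemma uniq_euler_block_edges k : uniq (walk_edges (0 :: euler_block k)).
Proof.
rewrite walk_edges_euler_block !cons_uniq rcons_uniq !inE !mem_rcons !inE.
by rewrite !mem_star_walk_edges !mem_iota uniq_star_walk_edges ?iota_uniq ?mem_iota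
  ?xpair_eqE /=; lia.
Qed.

Lemma euler_block_edges_touch k p :
  p \in walk_edges (0 :: euler_block k) -> (p.1 == k.+1) || (p.2 == k.+1).
Proof.
rewrite walk_edges_euler_block !inE mem_rcons inE mem_star_walk_edges.
by case: p => a b /=; case/or4P => [/eqP[_ ->]|/eqP[-> _]|/eqP[-> _]|/orP[]/andP[-> _]];
  rewrite ?eqxx ?orbT.
Qed.

Fixpoint euler_tail (k : nat) : seq nat :=
  if k is k'.+1 then euler_tail k' ++ euler_block k' else [:: 0].

Definition euler_walk (k : nat) : seq nat := 0 :: euler_tail k.

Lemma last_euler_tail k : last 0 (euler_tail k) = 0.
Proof. by case: k => //= k; rewrite last_cat /euler_block /= last_rcons. Qed.

Lemma size_euler_block k : size (euler_block k) = k.*2.+3.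
Proof.
by rewrite /euler_block -cat1s -cats1 !size_cat size_star_walk size_iota /=; lia.
Qed.

Lemma euler_walk_succ k : euler_walk k.+1 = euler_walk k ++ euler_block k.
Proof. by []. Qed.

Lemma size_euler_walk k : size (euler_walk k) = (k.+1 ^ 2).+1.
Proof.
elim: k => // k IH.
by rewrite euler_walk_succ size_cat IH size_euler_block; lia.
Qed.

Lemma euler_walk_bounded k : all (fun x => x <= k) (euler_walk k).
Proof.
elim: k => // k IH; rewrite euler_walk_succ all_cat (sub_all _ IH) => [|x /leqW //].
apply/allP => x; rewrite /euler_block in_cons mem_rcons in_cons mem_star_walk mem_iota.
lia.
Qed.

(* Old edges stay below k.+1, every new edge touches k.+1. *)
Lemma uniq_euler_walk_edges k : uniq (walk_edges (euler_walk k)).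
Proof.
elim: k => // k IH; rewrite euler_walk_succ /euler_walk cat_cons walk_edges_cat.
rewrite last_euler_tail -/(euler_walk k) cat_uniq IH uniq_euler_block_edges andbT.
apply/hasPn => -[a b] /euler_block_edges_touch /= new_ab; apply/negP => /mem_walk_edges.
have bounded := allP (euler_walk_bounded k).
by case/andP => /bounded /= le_a /bounded /= le_b; lia.
Qed.

Theorem mainTheorem4 (nu : nat) (hnu : 0 < nu) :
  exists v : nat -> 'I_nu, isolated_equality (nu ^ 2) v.
Proof.
case: nu hnu => [|k] // _.
set s : seq 'I_k.+1 := map inord (euler_walk k).
have val_s : map val s = euler_walk k.
  rewrite -map_comp -[RHS]map_id; apply/eq_in_map => x /(allP (euler_walk_bounded k)).
  by move=> le_xk /=; rewrite inordK.
have uniq_s : uniq (walk_edges s).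
  by apply: (@map_uniq _ _ (fun p => (val p.1, val p.2))); rewrite -walk_edges_map val_s
     uniq_euler_walk_edges.
exists (nth ord0 s).
have -> : k.+1 ^ 2 = (size s).-1 by rewrite size_map size_euler_walk.
exact: isolated_equality_uniq_walk_edges.
Qed.
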